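(* Let $t\ge 2$ be an integer, let $\mathcal A$ be an alphabet, and let $\mathfrak C_t$ be the simple 2-level network $([t,t+1],[t,t])$, with an adversary able to corrupt up to $t$ of the edges outgoing from the source. Then, for every positive integer $i$, the $i$-shot capacity of $\mathfrak C_t$ (in Scenario A.1 as well as in Scenario A.2) is \[C_i(\mathfrak C_t,\mathcal A,\mathbf A_{\mathfrak C_t})=1.\]
   Context: An alphabet is a finite set $\mathcal A$ with $|\mathcal A|\ge 2$. For positive integers $a_j,b_j$, the simple 2-level network $([a_1,\dots,a_n],[b_1,\dots,b_n])$ is the directed acyclic multigraph with a source $S$, intermediate nodes $V_1,\dots,V_n$, a single terminal $T$, exactly $a_j$ parallel edges from $S$ to $V_j$ and exactly $b_j$ parallel edges from $V_j$ to $T$, and no other edges. Each edge carries one symbol of $\mathcal A$. A network code is a family $\mathcal F=\{\mathcal F_{V_j}:\mathcal A^{a_j}\to\mathcal A^{b_j}\}_j$. In one use, the source sends $x\in\mathcal A^{a_1+\dots+a_n}$ on its outgoing edges (the set $\mathcal U_S$), the adversary may replace the symbols on up to $t$ edges of $\mathcal U_S$ by arbitrary symbols, each $V_j$ applies $\mathcal F_{V_j}$ to the symbols it receives and sends the result to $T$. The fan-out set $\Omega_{\mathcal F}(x)$ is the set of all vectors $T$ can receive. For $i$ uses with the same network code, the input is $(x^1,\dots,x^i)$ and: in Scenario A.1 the adversary fixes one set $W\subseteq\mathcal U_S$ with $|W|\le t$ and in each of the $i$ rounds may alter (arbitrarily, independently per round) only symbols on edges of $W$; in Scenario A.2 the adversary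 may choose a different set of at most $t$ edges in each round, so the fan-out set is $\Omega_{\mathcal F}(x^1)\times\dots\times\Omega_{\mathcal F}(x^i)$. A nonempty code $C\subseteq(\mathcal A^{a_1+\dots+a_n})^i$ is unambiguous if distinct codewords have disjoint fan-out sets. The $i$-shot capacity $C_i$ is the maximum of $\log_{|\mathcal A|}(|C|)/i$ over all network codes and unambiguous codes $C$. *)

From mathcomp Require Import all_boot.
From Stdlib Require Import Reals.
Set Implicit Arguments.
Unset Strict Implicit.
Unset Printing Implicit Defensive.

Inductive scenario := ScenarioA1 | ScenarioA2.

Section Network.
(* Alphabet A (finite), simple 2-level network ([a_1..a_n],[b_1..b_n]),
   adversary power t, number of uses i. *)
Variables (A : finType) (n : nat) (a b : 'I_n -> nat) (t i : nat).

(* Edges outgoing from the source: the a_j parallel edges S -> V_j. *)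
Definition edgeS : finType := {j : 'I_n & 'I_(a j)}.

Definition input : finType := {ffun edgeS -> A}.

Definition netcode : finType :=
  {dffun forall j : 'I_n, {ffun {ffun 'I_(a j) -> A} -> {ffun 'I_(b j) -> A}}}.

Definition output : finType := {dffun forall j : 'I_n, {ffun 'I_(b j) -> A}}.

Definition restr (x : input) (j : 'I_n) : {ffun 'I_(a j) -> A} :=
  [ffun k => x (Tagged (fun j => 'I_(a j)) k)].

Definition out (F : netcode) (x : input) : output :=
  [ffun j => F j (restr x j)].

Definition fanout (F : netcode) (x : input) (y : output) : bool :=
  [exists x' : input, (#|[set e | x e != x' e]| <= t) && (out F x' == y)].

Definition codeword : finType := {ffun 'I_i -> input}.
Definition received : finType := {ffun 'I_i -> output}.

Definition fanout_multi (sc : scenario) (F : netcode) (X : codeword)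
    (Y : received) : bool :=
  match sc with
  | ScenarioA1 =>
      (* one fixed set W of at most t source edges for all rounds *)
      [exists W : {set edgeS}, (#|W| <= t) &&
         [forall r : 'I_i, exists x' : input,
            [forall e, (e \notin W) ==> (x' e == X r e)] && (out F x' == Y r)]]
  | ScenarioA2 =>
      (* a possibly different set each round: product of fan-out sets *)
      [forall r : 'I_i, fanout F (X r) (Y r)]
  end.

Definition unambiguous (sc : scenario) (F : netcode) (C : {set codeword}) : bool :=
  (C != set0) &&
  [forall X in C, forall X' in C,
     (X != X') ==> ~~ [exists Y, fanout_multi sc F X Y && fanout_multi sc F X' Y]].

Definition max_code_size (sc : scenario) : nat :=
  \max_(F : netcode) \max_(C : {set codeword} | unambiguous sc F C) #|C|.

Definition capacity (sc : scenario) : R :=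
  Rdiv (ln (INR (max_code_size sc))) (Rmult (INR i) (ln (INR #|A|))).

End Network.

Definition Ct_a (t : nat) : 'I_2 -> nat := fun j => nth 0 [:: t; t.+1] j.
Definition Ct_b (t : nat) : 'I_2 -> nat := fun j => nth 0 [:: t; t] j.

(* Reals is imported first so that [^] and [<] keep their ssrnat meaning. *)
From Stdlib Require Import Reals.
From mathcomp Require Import all_boot zify.

Set Implicit Arguments.
Unset Strict Implicit.
Unset Printing Implicit Defensive.

(* Upper bound: a codeword of an unambiguous code is determined by its symbols
   on the first edge e0 into V2.  Two codewords that agree there in every round
   are both corrupted into the same hybrid input, one on the t edges into V1,
   the other on the remaining t edges into V2; hence |C| <= |A|^i.
   Lower bound: repeat each round's symbol on all 2t+1 edges.  V1 forwards its
   word, V2 sends its most frequent symbol p together with the multiplicity of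
   p, capped below at 2, as a word of length t.  If one terminal view is
   reachable from two symbols c <> c', then at every V1 position one of them is
   missed, and the tallies force occ c + occ' c' <= t+1 at V2, so the two
   corruptions together change at least 2t+1 > 2t edges. *)

Lemma big_ord2 (F : 'I_2 -> nat) : \sum_(j < 2) F j = F ord0 + F ord_max.
Proof. by rewrite big_ord_recl big_ord1; congr (_ + F _); exact: val_inj. Qed.

Section Occurrences.
Variable A : finType.

Definition occ m (w : {ffun 'I_m -> A}) (x : A) : nat := #|[set k | w k == x]|.

Lemma occ_disjoint m (w : {ffun 'I_m -> A}) x y : x != y -> occ w x + occ w y <= m.
Proof.
move=> neq_xy; rewrite -cardsUI.
have -> : [set k | w k == x] :&: [set k | w k == y] = set0.
  by apply/setP => k; rewrite !inE; case: eqP => // ->; rewrite (negbTE neq_xy).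
by rewrite cards0 addn0; apply: leq_trans (max_card _) _; rewrite card_ord.
Qed.

End Occurrences.

Section Network.
Variables (A : finType) (n : nat) (a b : 'I_n -> nat) (t i : nat).
Implicit Types (sc : scenario) (x : input A a) (F : netcode A a b).
Implicit Types (X Z : codeword A a i) (C : {set codeword A a i}).

Lemma outE F x j : out F x j = F j (restr x j).
Proof. by rewrite ffunE. Qed.

Lemma card_edgeS (P : pred (edgeS a)) :
  #|[set e | P e]| =
  \sum_(j : 'I_n) #|[set k : 'I_(a j) | P (Tagged (fun j => 'I_(a j)) k)]|.
Proof.
rewrite -sum1dep_card.
rewrite (eq_bigl (fun e => xpredT (tag e) && P (Tagged _ (tagged e)))); last by case.
rewrite -(@sig_big_dep _ _ _ _ (fun j => 'I_(a j)) xpredT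
            (fun j k => P (Tagged (fun j => 'I_(a j)) k)) (fun _ _ => 1)).
by apply: eq_bigr => j _; rewrite sum1dep_card.
Qed.

Definition const_input (c : A) : input A a := [ffun _ => c].

Lemma card_mismatch_const c x :
  #|[set e | const_input c e != x e]| + \sum_j occ (restr x j) c = \sum_j a j.
Proof.
rewrite card_edgeS -big_split; apply: eq_bigr => j _ /=.
rewrite (@eq_card _ _ (~: [set k | restr x j k == c])); last first.
  by move=> k; rewrite !inE !ffunE eq_sym.
by rewrite addnC cardsC card_ord.
Qed.

Lemma fanout_multi_agree sc F X Z (W : {set edgeS a}) :
  #|W| <= t -> (forall r e, e \notin W -> Z r e = X r e) ->
  fanout_multi t sc F X [ffun r => out F (Z r)].
Proof.
move=> card_W eq_ZX; case: sc => /=.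
- apply/existsP; exists W; rewrite card_W /=; apply/forallP => r; apply/existsP.
  exists (Z r); rewrite ffunE eqxx andbT; apply/forallP => e.
  by apply/implyP => /eq_ZX ->.
- apply/forallP => r; apply/existsP; exists (Z r); rewrite ffunE eqxx andbT.
  apply: leq_trans card_W; apply/subset_leq_card/subsetP => e.
  by rewrite inE; apply: contraR => /eq_ZX ->; rewrite eqxx.
Qed.

Lemma fanout_multi_round sc F X Y r :
  fanout_multi t sc F X Y -> fanout t F (X r) (Y r).
Proof.
case: sc => /=; last by move/forallP.
case/existsP => W /andP[card_W /forallP/(_ r)/existsP[x' /andP[/forallP eq_x' out_x']]].
apply/existsP; exists x'; rewrite out_x' andbT; apply: leq_trans card_W.
apply/subset_leq_card/subsetP => e; rewrite inE; apply: contraR => e_W.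
by rewrite eq_sym (implyP (eq_x' e) e_W).
Qed.

Lemma unambiguous_card_le sc F C (e0 : edgeS a) (W : {set edgeS a}) :
  #|W| <= t -> #|~: (e0 |: W)| <= t -> unambiguous t sc F C -> #|C| <= #|A| ^ i.
Proof.
move=> card_W card_W' /andP[_ /forallP unamb_C].
pose at_e0 X : {ffun 'I_i -> A} := [ffun r => X r e0].
suff inj : {in C &, injective at_e0}.
  rewrite -(card_in_imset inj); apply: leq_trans (max_card _) _.
  by rewrite card_ffun card_ord.
move=> X X' X_C X'_C eq_e0; apply/eqP/negPn/negP => neq_XX'.
have /forallP/(_ X') := implyP (unamb_C X) X_C; rewrite X'_C neq_XX' /=.
(* Z is reached from X by corrupting W, from X' by corrupting all but e0 and W. *)
pose Z : codeword A a i := [ffun r => [ffun e => if e \in W then X' r e else X r e]].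
move/negP; apply; apply/existsP; exists [ffun r => out F (Z r)]; apply/andP; split.
- by apply: fanout_multi_agree card_W _ => r e /negbTE e_W; rewrite !ffunE e_W.
- apply: fanout_multi_agree card_W' _ => r e; rewrite !inE negbK !ffunE.
  case/orP=> [/eqP-> | ->] //; case: ifP => // _.
  by have /ffunP/(_ r) := eq_e0; rewrite !ffunE.
Qed.

Definition repetition_code : {set codeword A a i} :=
  [set [ffun r => const_input (msg r)] | msg : {ffun 'I_i -> A}].

Lemma card_repetition_code (e : edgeS a) : #|repetition_code| = #|A| ^ i.
Proof.
rewrite card_imset ?card_ffun ?card_ord // => msg msg' /ffunP eq_msg.
by apply/ffunP => r; have /ffunP/(_ e) := eq_msg r; rewrite !ffunE.
Qed.

Lemma repetition_code_unambiguous sc F (c0 : A) :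
  (forall c c' y,
     fanout t F (const_input c) y -> fanout t F (const_input c') y -> c = c') ->
  unambiguous t sc F repetition_code.
Proof.
move=> fanout_const_inj; apply/andP; split.
  by apply/set0Pn; exists [ffun r => const_input ([ffun=> c0] r)]; apply: imset_f.
apply/forallP => X; apply/implyP => /imsetP[msg _ ->].
apply/forallP => X'; apply/implyP => /imsetP[msg' _ ->].
apply/implyP => neq; apply/negP => /existsP[Y /andP[fan fan']].
suff eq_msg : msg = msg' by rewrite eq_msg eqxx in neq.
apply/ffunP => r; apply: (fanout_const_inj _ _ (Y r)).
- by have := fanout_multi_round r fan; rewrite ffunE.
- by have := fanout_multi_round r fan'; rewrite ffunE.
Qed.

Lemma max_code_size_eq sc F C :
  (forall F' C', unambiguous t sc F' C' -> #|C'| <= #|C|) -> unambiguous t sc F C ->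
  max_code_size A a b t i sc = #|C|.
Proof.
move=> bound unamb_C; apply/eqP; rewrite eqn_leq; apply/andP; split.
- by apply/bigmax_leqP => F' _; apply/bigmax_leqP => C'; apply: bound.
- apply: leq_trans (leq_bigmax F).
  exact: leq_bigmax_cond.
Qed.

Lemma INR_expn p q : INR (p ^ q) = pow (INR p) q.
Proof. by elim: q => [|q IHq] //; rewrite expnS mulnE mult_INR IHq. Qed.

Lemma capacity_eq1 sc : 1 < #|A| -> 0 < i ->
  max_code_size A a b t i sc = #|A| ^ i -> capacity A a b t i sc = R1.
Proof.
move=> card_A i_gt0 max_C; rewrite /capacity max_C INR_expn.
have gt1_A : Rlt 1 (INR #|A|) by apply: (lt_INR 1); apply/ltP.
rewrite ln_pow; last exact: Rlt_trans Rlt_0_1 gt1_A.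
apply: Rdiv_diag; apply: Rmult_integral_contrapositive_currified.
- by apply: not_0_INR; case: i i_gt0.
- by apply: Rgt_not_eq; rewrite -ln_1; apply: ln_increasing => //; exact: Rlt_0_1.
Qed.

End Network.

Section Plurality.
Variables (A : finType) (z0 : A).

Definition plurality m (w : {ffun 'I_m -> A}) : A := [arg max_(x > z0) occ w x].

Definition tally m (w : {ffun 'I_m -> A}) : nat := maxn (occ w (plurality w)) 2.

Lemma occ_le_plurality m (w : {ffun 'I_m -> A}) x : occ w x <= occ w (plurality w).
Proof. by rewrite /plurality; case: arg_maxnP => // y _; apply. Qed.

Lemma tally_bounds m (w : {ffun 'I_m -> A}) : 2 <= m -> 2 <= tally w <= m.
Proof.
have : occ w (plurality w) <= m by apply: leq_trans (max_card _) _; rewrite card_ord.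
rewrite /tally; lia.
Qed.

Lemma occ_add_le_of_tally m (w w' : {ffun 'I_m -> A}) x y : 3 <= m ->
  plurality w = plurality w' -> tally w = tally w' -> x != y ->
  occ w x + occ w' y <= m.
Proof.
move=> m_ge3 eq_p; rewrite /tally -eq_p => eq_t neq_xy.
have le_x := occ_le_plurality w x; have le_y := occ_le_plurality w' y.
rewrite -eq_p in le_y; set p := plurality w in eq_t le_x le_y.
have [eq_xp | neq_xp] := eqVneq x p; have [eq_yp | neq_yp] := eqVneq y p.
- by rewrite eq_xp eq_yp eqxx in neq_xy.
- by have := occ_disjoint w' neq_yp; rewrite eq_xp in le_x *; lia.
- by have := occ_disjoint w neq_xp; rewrite eq_yp in le_y *; lia.
- by have := occ_disjoint w neq_xp; have := occ_disjoint w' neq_yp; lia.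
Qed.

End Plurality.

Section TallyWord.
Variables (A : finType) (z0 z1 : A).
Hypothesis neq_z01 : z0 != z1.

Definition other (x : A) : A := if x == z0 then z1 else z0.

Lemma other_neq x : other x != x.
Proof. by rewrite /other; case: (eqVneq x z0) => [-> |]; rewrite // eq_sym. Qed.

Definition step_word m (x : A) (c : nat) : {ffun 'I_m -> A} :=
  [ffun k : 'I_m => if k < c then x else other x].

Lemma step_word_inj m x x' c c' : 0 < c <= m -> 0 < c' <= m ->
  step_word m x c = step_word m x' c' -> x = x' /\ c = c'.
Proof.
move=> c_bd c'_bd eq_w.
have m_gt0 : 0 < m by lia.
have [c_gt0 c'_gt0] : 0 < c /\ 0 < c' by lia.
have eq_x : x = x'.
  by have /ffunP/(_ (Ordinal m_gt0)) := eq_w; rewrite !ffunE /= c_gt0 c'_gt0.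
split => //; subst x'.
have step_lt d d' : d < d' <= m -> step_word m x d <> step_word m x d'.
  move=> /andP[lt_dd' le_d'm] eq_d; have lt_dm : d < m by lia.
  have /ffunP/(_ (Ordinal lt_dm)) := eq_d; rewrite !ffunE /= ltnn lt_dd'.
  exact/eqP/other_neq.
case: (ltngtP c c') => // lt_cc'; exfalso.
- by apply: (step_lt c c' _ eq_w); lia.
- by apply: (step_lt c' c _ (esym eq_w)); lia.
Qed.

Definition tally_word m m' (w : {ffun 'I_m -> A}) : {ffun 'I_m' -> A} :=
  step_word m' (plurality z0 w) (tally z0 w).-1.

Lemma tally_word_inj m (w w' : {ffun 'I_m.+1 -> A}) : 0 < m ->
  tally_word m w = tally_word m w' ->
  plurality z0 w = plurality z0 w' /\ tally z0 w = tally z0 w'.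
Proof.
move=> m_gt0 eq_tw.
have bd := tally_bounds z0 w m_gt0; have bd' := tally_bounds z0 w' m_gt0.
have [||-> eq_pred] := step_word_inj _ _ eq_tw; try lia.
by split => //; lia.
Qed.

End TallyWord.

Definition copy_word (A : finType) (z0 : A) m m' (w : {ffun 'I_m -> A}) :
  {ffun 'I_m' -> A} :=
  [ffun k : 'I_m' => nth z0 (fgraph w) k].

Lemma copy_wordE (A : finType) (z0 : A) m (w : {ffun 'I_m -> A}) : copy_word z0 m w = w.
Proof. by apply/ffunP => k; rewrite ffunE nth_fgraph_ord. Qed.

Section Ct.
Variables (A : finType) (t : nat).
Local Notation a := (Ct_a t).
Local Notation b := (Ct_b t).

Definition edge1 (k : 'I_t) : edgeS a := @Tagged _ ord0 (fun j => 'I_(a j)) k.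
Definition edge2 (k : 'I_t.+1) : edgeS a := @Tagged _ ord_max (fun j => 'I_(a j)) k.

Lemma card_edgeS_Ct (S : {set edgeS a}) :
  #|S| = #|[set k | edge1 k \in S]| + #|[set k | edge2 k \in S]|.
Proof.
rewrite (@eq_card _ S [set e | e \in S]) => [|e]; last by rewrite inE.
by rewrite card_edgeS big_ord2.
Qed.

Definition edges_V1 : {set edgeS a} := [set e | tag e == ord0].

Lemma card_edges_V1 : #|edges_V1| <= t.
Proof.
rewrite card_edgeS_Ct (@eq_card0 _ [set k | edge2 k \in edges_V1]) => [|k]; last first.
  by rewrite !inE.
by rewrite addn0; apply: leq_trans (max_card _) _; rewrite card_ord.
Qed.

Lemma card_edges_V2_but_first : #|~: (edge2 ord0 |: edges_V1)| <= t.
Proof.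
set S := ~: _; rewrite card_edgeS_Ct (@eq_card0 _ [set k | edge1 k \in S]); last first.
  by move=> k; rewrite !inE eqxx orbT.
rewrite (@eq_card _ _ [set~ ord0]) ?cardsC1 ?card_ord // => k.
by rewrite !inE /edge2 eq_Tagged /= orbF.
Qed.

Variables (z0 z1 : A).
Hypothesis neq_z01 : z0 != z1.

(* Only for j = ord0 are 'I_(a j) and 'I_(b j) convertible, hence [copy_word]. *)
Definition Ct_node (j : 'I_2) : {ffun {ffun 'I_(a j) -> A} -> {ffun 'I_(b j) -> A}} :=
  [ffun w => if j == ord0 then copy_word z0 _ w else tally_word z0 z1 _ w].

Definition Ct_code : netcode A a b := finfun Ct_node.

Lemma Ct_code_V1 x : out Ct_code x ord0 = restr x ord0.
Proof. by rewrite outE !ffunE /= copy_wordE. Qed.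

Lemma Ct_code_V2 x : out Ct_code x ord_max = tally_word z0 z1 t (restr x ord_max).
Proof. by rewrite outE !ffunE. Qed.

Lemma Ct_fanout_const_inj c c' y : 2 <= t ->
  fanout t Ct_code (const_input a c) y -> fanout t Ct_code (const_input a c') y -> c = c'.
Proof.
move=> t_ge2 /existsP[x /andP[dist_x /eqP out_x]] /existsP[x' /andP[dist_x' /eqP out_x']].
apply/eqP/negPn/negP => neq_cc'.
have /ffunP out_eq : out Ct_code x = out Ct_code x' by rewrite out_x out_x'.
have eq_V1 : restr x ord0 = restr x' ord0 by rewrite -!Ct_code_V1 out_eq.
have eq_V2 : tally_word z0 z1 t (restr x ord_max) = tally_word z0 z1 t (restr x' ord_max).
  by rewrite -!Ct_code_V2 out_eq.
have [eq_p eq_t] := tally_word_inj neq_z01 (ltnW t_ge2) eq_V2.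
have V1_bd := occ_disjoint (restr x ord0) neq_cc'.
have V2_bd := occ_add_le_of_tally (m := a ord_max) t_ge2 eq_p eq_t neq_cc'.
have := card_mismatch_const c x; have := card_mismatch_const c' x'.
have [a0 a1] : a ord0 = t /\ a ord_max = t.+1 by [].
rewrite !big_ord2 -eq_V1; lia.
Qed.

End Ct.

Theorem proposition4p5 (A : finType) (t i : nat) (sc : scenario) :
  1 < #|A| -> 2 <= t -> 0 < i ->
  capacity A (Ct_a t) (Ct_b t) t i sc = R1.
Proof.
move=> card_A t_ge2 i_gt0; have [z0 [z1 [_ _ neq_z01]]] := card_gt1P card_A.
have e : edgeS (Ct_a t) := edge1 (Ordinal (ltnW t_ge2)).
have unamb : unambiguous t sc (Ct_code t z0 z1) (repetition_code A (Ct_a t) i).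
  by apply: (repetition_code_unambiguous i sc z0) => c c' y; apply: Ct_fanout_const_inj.
apply: capacity_eq1 => //; rewrite -(card_repetition_code A i e).
apply: max_code_size_eq unamb => F C unamb_C; rewrite (card_repetition_code A i e).
exact: unambiguous_card_le (card_edges_V1 t) (card_edges_V2_but_first t) unamb_C.
Qed.
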